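(* Let $F$ be a field, let $e_1\in M_n(F)$ be an idempotent of rank $r$ with $0<r<n$, and set $e_2=I_n-e_1$. Let $\sigma_1\ne\sigma_2\in F$ be such that $k_1\sigma_1+k_2\sigma_2\ne0$ for all integer pairs $(k_1,k_2)\ne(0,0)$ with $0\le k_1\le r$, $0\le k_2\le n-r$. Then $$V=\big(\{\sigma_1e_1+\sigma_2e_2\}\cup e_1M_n(F)e_2\big)^\perp=\{a\in M_n(F):\ e_2ae_1=0,\ \sigma_1\mathrm{Tr}(e_1ae_1)+\sigma_2\mathrm{Tr}(e_2ae_2)=0\}$$ is a maximal Mathieu subspace of $M_n(F)$ of codimension $rn-r^2+1$.
   Context: Let $\mathcal A$ be an associative algebra over a field $F$. An $F$-subspace $M\subseteq\mathcal A$ is a Mathieu subspace (MS) of $\mathcal A$ if for all $a,b,c\in\mathcal A$ such that $a^m\in M$ for all $m\ge 1$, there exists $N$ (depending on $a,b,c$) such that $ba^mc\in M$ for all $m\ge N$. A maximal MS of $\mathcal A$ is a proper MS of $\mathcal A$ that is not properly contained in any proper MS of $\mathcal A$. For $S\subseteq M_n(F)$, $S^\perp=\{b\in M_n(F):\mathrm{Tr}(bx)=0\ \forall x\in S\}$. *)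

From HB Require Import structures.
From mathcomp Require Import all_boot all_order all_algebra.
Set Implicit Arguments. Unset Strict Implicit. Unset Printing Implicit Defensive.
Import GRing.Theory.
Local Open Scope ring_scope.

(* m-th power of a square matrix (works for every n, including n = 0,
   where 'M_n is not a ring in MathComp) *)
Definition mxpow (F : fieldType) (n : nat) (a : 'M[F]_n) (m : nat) : 'M[F]_n :=
  iter m (mulmx a) 1%:M.

(* Mathieu subspace of the algebra M_n(F); F-subspaces of M_n(F) are
   represented as {vspace 'M[F]_n} (all subspaces, since finite-dimensional). *)
Definition mathieu_subspace (F : fieldType) (n : nat) (M : {vspace 'M[F]_n}) : Prop :=
  forall a b c : 'M[F]_n,
    (forall m, (1 <= m)%N -> mxpow a m \in M) ->
    exists N : nat, forall m, (N <= m)%N -> b *m mxpow a m *m c \in M.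

Definition maximal_mathieu_subspace (F : fieldType) (n : nat) (M : {vspace 'M[F]_n}) : Prop :=
  [/\ mathieu_subspace M, M != fullv &
      forall N : {vspace 'M[F]_n}, mathieu_subspace N -> N != fullv ->
        (M <= N)%VS -> N = M].

Definition perp (F : fieldType) (n : nat) (S : 'M[F]_n -> Prop) (b : 'M[F]_n) : Prop :=
  forall x, S x -> \tr (b *m x) = 0.

From HB Require Import structures.
From mathcomp Require Import all_boot all_order all_algebra.
From mathcomp Require Import ring.
Set Implicit Arguments. Unset Strict Implicit. Unset Printing Implicit Defensive.
Import GRing.Theory.
Local Open Scope ring_scope.

(* [V] is the kernel of [a |-> (e2 a e1, s1 Tr(e1 a e1) + s2 Tr(e2 a e2))], which
   maps onto [e2 M_n(F) e1 (+) F]; this gives the codimension [r(n - r) + 1].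
   A subspace without nonzero idempotents is a Mathieu subspace, since a matrix
   all of whose positive powers lie in it is nilpotent: otherwise a suitable
   polynomial in it without constant term (Fitting) is a nonzero idempotent.
   [V] has no nonzero idempotent: an idempotent [E] with [e2 E e1 = 0] has
   idempotent diagonal corners, whose traces are their ranks [k1 <= r] and
   [k2 <= n - r]; the condition on [s1, s2] forces [k1 = k2 = 0], so [E = e1 E e2]
   squares to [0].  Maximality: a Mathieu subspace containing a nonzero
   idempotent [g] contains every [b g c], hence everything, and any subspace
   strictly containing [V] contains either [e1 + t c] or an idempotent lift
   [g] of a nonzero [c = e2 g e1] with vanishing weighted trace. *)

Section Peirce.
Variables (R : pzRingType) (e : R).
Hypothesis e_idem : e * e = e.
Local Notation f := (1 - e).

Lemma idem_mul_compl : e * f = 0.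
Proof. by rewrite mulrBr mulr1 e_idem subrr. Qed.

Lemma compl_mul_idem : f * e = 0.
Proof. by rewrite mulrBl mul1r e_idem subrr. Qed.

Lemma compl_idem : f * f = f.
Proof. by rewrite mulrBr mulr1 compl_mul_idem subr0. Qed.

Lemma peirce_decomp x : x = e * x * e + e * x * f + f * x * e + f * x * f.
Proof.
rewrite -mulrDr [e + _]addrC subrK mulr1 -addrA -mulrDr [e + _]addrC subrK.
by rewrite mulr1 -mulrDl [e + _]addrC subrK mul1r.
Qed.

Lemma mul_corner_fe c : c = f * c * e ->
  [/\ e * c = 0, c * e = c, f * c = c & c * f = 0].
Proof.
move=> ->; split; first by rewrite !mulrA idem_mul_compl !mul0r.
- by rewrite -mulrA e_idem.
- by rewrite !mulrA compl_idem.
- by rewrite -mulrA idem_mul_compl mulr0.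
Qed.

Lemma mul_corner_ef b : b = e * b * f ->
  [/\ e * b = b, b * e = 0, f * b = 0 & b * f = b].
Proof.
move=> ->; split; first by rewrite !mulrA e_idem.
- by rewrite -mulrA compl_mul_idem mulr0.
- by rewrite !mulrA compl_mul_idem !mul0r.
- by rewrite -mulrA compl_idem.
Qed.

Lemma idem_add_corner c : c = f * c * e -> (e + c) * (e + c) = e + c.
Proof.
move=> /mul_corner_fe[ec ce fc cf].
have cc : c * c = 0 by rewrite -{1}ce -mulrA ec mulr0.
by rewrite mulrDl !mulrDr e_idem ec ce cc !addr0 addrC.
Qed.

Section IdempotentCorners.
Variable E : R.
Hypotheses (E_idem : E * E = E) (E_upper : f * E * e = 0).

Lemma idem_corner_diag : (e * E * e) * (e * E * e) = e * E * e /\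
                         (f * E * f) * (f * E * f) = f * E * f.
Proof.
have Ee : E * e = e * E * e.
  by apply/eqP; rewrite -subr_eq0 -[E in E * e]mul1r -!mulrBl E_upper.
have fE : f * E = f * E * f.
  by rewrite mulrBr mulr1 E_upper subr0.
split.
  by rewrite -Ee mulrA -(mulrA E e E) -mulrA -Ee mulrA E_idem.
by rewrite -fE mulrA -fE -mulrA E_idem.
Qed.

Lemma idem_corner_eq0 : e * E * e = 0 -> f * E * f = 0 -> E = 0.
Proof.
move=> eEe fEf.
have EeEf : E = e * E * f by rewrite {1}[E]peirce_decomp eEe fEf E_upper !addr0 add0r.
by rewrite -E_idem EeEf !mulrA -(mulrA _ f e) compl_mul_idem mulr0 !mul0r.
Qed.
End IdempotentCorners.

Lemma corner_reflexive_inverse c z : c = f * c * e -> c * z * c = c ->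
  let b := e * z * f * c * (e * z * f) in
  [/\ b = e * b * f, c * b * c = c & b * c * b = b].
Proof.
move=> /mul_corner_fe[_ ce fc _] czc b; rewrite {}/b; set z' := e * z * f.
have ez' : e * z' = z' by rewrite /z' !mulrA e_idem.
have z'f : z' * f = z' by rewrite /z' -mulrA compl_idem.
have cz'c : c * z' * c = c.
  by rewrite /z' -!mulrA fc (mulrA c e) ce (mulrA c z) czc.
clearbody z'.
have xcz'c x : x * c * z' * c = x * c by rewrite -!mulrA (mulrA c z') cz'c.
split; rewrite !mulrA ?xcz'c //.
by rewrite ez' -(mulrA _ z' f) z'f.
Qed.

End Peirce.

Section PeirceLift.
Variables (K : pzRingType) (A : algType K) (e : A).
Hypothesis e_idem : e * e = e.
Local Notation f := (1 - e).

(* [g = u v] where [v u = c b] is idempotent and [u (c b) = u]. *)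
Lemma idem_lift_corner (c b : A) (p q : K) :
  c = f * c * e -> b = e * b * f -> c * b * c = c -> b * c * b = b -> p + q = 1 ->
  let g := (p *: b + c * b) * (c + q *: (c * b)) in
  [/\ g * g = g, f * g * e = c, e * g * e = p *: (b * c) & f * g * f = q *: (c * b)].
Proof.
move=> /(mul_corner_fe e_idem)[ec ce fc cf] /(mul_corner_ef e_idem)[eb be fb bf].
move=> cbc bcb pq; set u := p *: b + c * b; set v := c + q *: (c * b).
have cc : c * c = 0 by rewrite -{1}ce -mulrA ec mulr0.
have bb : b * b = 0 by rewrite -{2}eb mulrA be mul0r.
have cbcb : c * b * (c * b) = c * b by rewrite mulrA cbc.
have vu : v * u = c * b.
  rewrite mulrDl !mulrDr -!scalerAl -!scalerAr (mulrA c c) cc mul0r addr0.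
  by rewrite -(mulrA c b b) bb mulr0 !scaler0 cbcb add0r -scalerDl pq scale1r.
have ucb : u * (c * b) = u.
  by rewrite mulrDl -scalerAl !mulrA bcb cbc.
have fu : f * u = c * b by rewrite mulrDr -scalerAr fb scaler0 add0r mulrA fc.
have eu : e * u = p *: b by rewrite mulrDr -scalerAr eb mulrA ec mul0r addr0.
have ve : v * e = c by rewrite mulrDl ce -scalerAl -mulrA be mulr0 scaler0 addr0.
have vf : v * f = q *: (c * b) by rewrite mulrDl cf add0r -scalerAl -mulrA bf.
split.
- by rewrite mulrA -(mulrA u v u) vu ucb.
- by rewrite mulrA -mulrA fu ve cbc.
- by rewrite mulrA -mulrA eu ve scalerAl.
- by rewrite mulrA -mulrA fu vf -scalerAr cbcb.
Qed.

End PeirceLift.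

Section MathieuSubspaces.
Variables (F : fieldType) (n : nat).
Implicit Types (a b c g : 'M[F]_n) (S : {vspace 'M[F]_n}).

Lemma mxpowE a m : mxpow a m = a ^+ m.
Proof. by elim: m => [|m IHm] /=; rewrite ?expr0 // IHm exprS mulmxE. Qed.

Lemma row_col_base_idem (e : 'M[F]_n) : e * e = e -> row_base e *m col_base e = 1%:M.
Proof.
move=> e_idem; have /row_fullP[B BP] := col_base_full e.
have /row_freeP[C QC] := row_base_free e.
set P := col_base e in BP *; set Q := row_base e in QC *.
have PQ : P *m Q = e by exact: mulmx_base.
clearbody P Q.
have : B *m (P *m Q *m (P *m Q)) *m C = B *m (P *m Q) *m C by rewrite PQ mulmxE e_idem.
by rewrite !mulmxA BP mul1mx -!mulmxA QC !mulmx1.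
Qed.

Lemma row_base_idemK (e : 'M[F]_n) : e * e = e -> row_base e *m e = row_base e.
Proof.
by move=> e_idem; rewrite -[X in _ *m X](mulmx_base e) mulmxA row_col_base_idem // mul1mx.
Qed.

Lemma col_base_idemK (e : 'M[F]_n) : e * e = e -> e *m col_base e = col_base e.
Proof.
by move=> e_idem; rewrite -[X in X *m _](mulmx_base e) -mulmxA row_col_base_idem // mulmx1.
Qed.

Lemma mulmx_base_sandwich (e e' a : 'M[F]_n) :
  e' *m a *m e = col_base e' *m (row_base e' *m a *m col_base e) *m row_base e.
Proof.
rewrite (mulmxA _ (_ *m a)) (mulmxA (col_base e')) (mulmx_base e').
by rewrite -(mulmxA _ (col_base e)) (mulmx_base e).
Qed.

Lemma row_col_base_sandwich (e e' : 'M[F]_n) (X : 'M[F]_(\rank e', \rank e)) :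
  e * e = e -> e' * e' = e' ->
  row_base e' *m (col_base e' *m X *m row_base e) *m col_base e = X.
Proof.
move=> e_idem e'_idem.
rewrite (mulmxA _ (_ *m X)) (mulmxA (row_base e')) row_col_base_idem // mul1mx.
by rewrite -mulmxA row_col_base_idem // mulmx1.
Qed.

Lemma mxtrace_idem (e : 'M[F]_n) : e * e = e -> \tr e = (\rank e)%:R.
Proof.
by move=> e_idem; rewrite -{1}(mulmx_base e) mxtrace_mulC row_col_base_idem // mxtrace1.
Qed.

Lemma mul_delta_mx_mul (k i j l : 'I_n) g :
  delta_mx k i *m g *m delta_mx j l = g i j *: delta_mx k l.
Proof.
apply/matrixP => x y; rewrite !mxE (bigD1 j) //= big1 => [|z /negbTE zj].
  rewrite !mxE (bigD1 i) //= big1 => [|z /negbTE zi]; last by rewrite !mxE zi andbF mul0r.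
  rewrite !mxE !eqxx /= !andbT.
  by case: (x == k); case: (y == l); rewrite /= ?(mul1r, mul0r, mulr1, mulr0, addr0).
by rewrite !mxE zj mulr0.
Qed.

Lemma mxtrace_mul_delta (i j : 'I_n) a : \tr (a *m delta_mx j i) = a i j.
Proof.
rewrite /mxtrace (bigD1 i) //= big1 => [|k /negbTE ki]; rewrite mxE (bigD1 j) //= big1.
- by rewrite !mxE !eqxx mulr1 !addr0.
- by move=> z /negbTE zj; rewrite mxE zj mulr0.
- by rewrite !mxE ki andbF mulr0 addr0.
- by move=> z /negbTE zj; rewrite mxE zj mulr0.
Qed.

Lemma vspace_ideal_full S g :
  g != 0 -> (forall b c, b *m g *m c \in S) -> S = fullv.
Proof.
move=> g_neq0 gS; have /existsP[i /existsP[j gij]] : [exists i, exists j, g i j != 0].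
  apply: contraR g_neq0 => /existsPn g0.
  by apply/eqP/matrixP => i j; have /existsPn/(_ j)/negPn/eqP := g0 i; rewrite mxE.
apply/vspaceP => z; rewrite memvf (matrix_sum_delta z); apply/memv_suml => k _.
apply/memv_suml => l _; apply/memvZ.
have -> : delta_mx k l = (g i j)^-1 *: (delta_mx k i *m g *m delta_mx j l).
  by rewrite mul_delta_mx_mul scalerA mulVf // scale1r.
exact/memvZ/gS.
Qed.

Lemma mathieu_mul_idem S g : mathieu_subspace S -> g * g = g -> g \in S ->
  forall b c, b *m g *m c \in S.
Proof.
move=> S_ms g_idem gS b c.
have g_pow m : (0 < m)%N -> mxpow g m = g.
  by case: m => // m _; rewrite mxpowE; elim: m => // m IHm; rewrite exprS IHm.
have [N powS] := S_ms g b c (fun m m_gt0 => etrans (congr1 _ (g_pow m m_gt0)) gS).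
by have := powS N.+1 (leqnSn N); rewrite g_pow.
Qed.

Lemma mathieu_idem_full S g :
  mathieu_subspace S -> g * g = g -> g != 0 -> g \in S -> S = fullv.
Proof.
by move=> S_ms g_idem g_neq0 gS; apply: vspace_ideal_full g_neq0 _; exact: mathieu_mul_idem.
Qed.

Lemma idem_free_nilpotent S a :
  (forall m, (0 < m)%N -> a ^+ m \in S) -> (forall E, E \in S -> E * E = E -> E = 0) ->
  exists k, a ^+ k = 0.
Proof.
case: n a S => [|n'] a S powS idem_free; first by exists 0%N; apply: flatmx0.
(* [char_poly a = q X^k] with [q(0) != 0]; a Bezout relation between [X^(k+1)]
   and [q] yields the idempotent [E], a polynomial in [a] without constant term. *)
have [k [q q0 pE]] := multiplicity_XsubC (char_poly a) 0.
rewrite monic_neq0 ?char_poly_monic // polyC0 subr0 in q0 pE.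
have /Bezout_eq1_coprimepP[[u v] /= uv] : coprimep ('X ^+ k.+1) q.
  by apply: coprimep_expl; rewrite coprimep_sym coprimepX.
pose E := horner_mx a (u * 'X ^+ k.+1).
have hornerX m : horner_mx a ('X ^+ m) = a ^+ m by rewrite rmorphXn /= horner_mx_X.
have ES : E \in S.
  rewrite /E rmorphM /= -(coefK u) poly_def rmorph_sum /= mulr_suml.
  apply: memv_suml => i _; rewrite linearZ /= !hornerX -scalerAl -exprD.
  by apply/memvZ/powS; rewrite addnS.
have vq : horner_mx a (v * q) = 1 - E.
  by rewrite /E -(rmorph1 (horner_mx a)) -rmorphB -uv [u * _ + _]addrC addrK.
have p_a : horner_mx a (q * 'X ^+ k) = 0 by rewrite -pE Cayley_Hamilton.
have E_idem : E * E = E.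
  apply/eqP; rewrite eq_sym -subr_eq0 -[X in X - _]mulr1 -mulrBr -vq /E -rmorphM.
  have -> : u * 'X ^+ k.+1 * (v * q) = u * v * 'X * (q * 'X ^+ k) by rewrite exprS; ring.
  by rewrite rmorphM /= p_a mulr0.
exists k; have := congr1 (fun x => x * a ^+ k) vq.
rewrite /= (idem_free _ ES E_idem) subr0 mul1r => <-.
by rewrite -hornerX -rmorphM -mulrA rmorphM /= p_a mulr0.
Qed.

Lemma mathieu_idem_free S :
  (forall E, E \in S -> E * E = E -> E = 0) -> mathieu_subspace S.
Proof.
move=> idem_free a b c powS.
have [k ak0] : exists k, a ^+ k = 0.
  by apply: (idem_free_nilpotent (S := S)) => // m /powS; rewrite mxpowE.
exists k => m km.
by rewrite mxpowE -(subnK km) exprD ak0 mulr0 mulmx0 mul0mx mem0v.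
Qed.

End MathieuSubspaces.

Section CornerSubspace.
Variables (F : fieldType) (n' : nat) (e1 : 'M[F]_n'.+1) (s1 s2 : F).
Local Notation n := n'.+1.
Local Notation r := (\rank e1).
Local Notation e2 := (1 - e1).
Hypotheses (e1_idem : e1 * e1 = e1) (r_gt0 : (0 < r)%N) (s1_neq_s2 : s1 != s2).
Hypothesis sigma_free : forall k1 k2 : nat, (k1 <= r)%N -> (k2 <= n - r)%N ->
  (k1, k2) != (0%N, 0%N) -> k1%:R * s1 + k2%:R * s2 != 0.

Definition weighted_tr (a : 'M[F]_n) : F^o := \tr (a * (s1 *: e1 + s2 *: e2)).

Lemma weighted_tr_is_linear : linear weighted_tr.
Proof. by move=> k a b; rewrite /weighted_tr mulrDl -scalerAl mxtraceD mxtraceZ. Qed.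

HB.instance Definition _ :=
  GRing.isLinear.Build F 'M[F]_n F^o *:%R weighted_tr weighted_tr_is_linear.

Lemma weighted_trZ k a : weighted_tr (k *: a) = k * weighted_tr a.
Proof. by rewrite /weighted_tr -scalerAl mxtraceZ. Qed.

Lemma weighted_trE a :
  weighted_tr a = s1 * \tr (e1 * a * e1) + s2 * \tr (e2 * a * e2).
Proof.
have tr_idem e : e * e = e -> \tr (a * e) = \tr (e * a * e).
  by move=> e_idem; rewrite -{1}e_idem mulrA [LHS]mxtrace_mulC mulmxA.
by rewrite /weighted_tr mulrDr -!scalerAr mxtraceD !mxtraceZ !tr_idem ?compl_idem.
Qed.

Lemma weighted_tr_corner c : c = e2 * c * e1 -> weighted_tr c = 0.
Proof.
move=> /(mul_corner_fe e1_idem)[ec _ fc cf].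
by rewrite weighted_trE ec fc cf mul0r !mxtrace0 !mulr0 addr0.
Qed.

Lemma weighted_tr_e1 : weighted_tr e1 = s1 * r%:R.
Proof.
by rewrite weighted_trE !e1_idem compl_mul_idem // mul0r mxtrace0 mulr0 addr0 mxtrace_idem.
Qed.

Lemma weighted_tr_e1_neq0 : weighted_tr e1 != 0.
Proof.
have := sigma_free (leqnn r) (leq0n _); rewrite xpair_eqE eqxx andbT -lt0n r_gt0.
by rewrite mul0r addr0 mulrC weighted_tr_e1; apply.
Qed.

Lemma rank_compl : \rank e2 = (n - r)%N.
Proof.
rewrite -mxrank_ker; apply/eqmx_rank/andP; split.
  by apply/sub_kermxP; exact: compl_mul_idem.
have -> : kermx e1 = kermx e1 *m e2 by rewrite mulmxBr mulmx1 mulmx_ker subr0.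
exact: submxMl.
Qed.

Local Notation P1 := (col_base e1).
Local Notation Q1 := (row_base e1).
Local Notation P2 := (col_base e2).
Local Notation Q2 := (row_base e2).

(* [Q2 *m a *m P1] represents [e2 a e1], as [e = P Q] with [Q P = 1] for the
   bases [P = col_base e], [Q = row_base e] of an idempotent [e]. *)
Definition corner_weight (a : 'M[F]_n) : ('M[F]_(\rank e2, r) * F^o)%type :=
  (Q2 *m a *m P1, weighted_tr a).

Lemma corner_weight_is_linear : linear corner_weight.
Proof.
move=> k a b; rewrite /corner_weight mulmxDr mulmxDl -scalemxAr -scalemxAl.
by rewrite [weighted_tr _]linearP.
Qed.

HB.instance Definition _ :=
  GRing.isLinear.Build F 'M[F]_n _ *:%R corner_weight corner_weight_is_linear.

Definition V := lker (linfun corner_weight).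

Lemma memV a : a \in V <-> e2 * a * e1 = 0 /\ weighted_tr a = 0.
Proof.
rewrite memv_ker lfunE /= xpair_eqE; have e2_idem := compl_idem e1_idem.
have -> : e2 * a * e1 = P2 *m (Q2 *m a *m P1) *m Q1 by exact: mulmx_base_sandwich.
split=> [/andP[/eqP -> /eqP ->] | [X0 ->]]; first by rewrite mulmx0 mul0mx.
by rewrite -(row_col_base_sandwich (Q2 *m a *m P1) e1_idem e2_idem) X0 mulmx0 mul0mx !eqxx.
Qed.

Lemma corner_weight_onto : limg (linfun corner_weight) = fullv.
Proof.
have e2_idem := compl_idem e1_idem.
apply/vspaceP => -[X t]; rewrite memvf; apply/memv_imgP.
exists (P2 *m X *m Q1 + (t / weighted_tr e1) *: e1); rewrite ?memvf // lfunE /=.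
have Y_corner : P2 *m X *m Q1 = e2 * (P2 *m X *m Q1) * e1.
  by rewrite -!mulmxE mulmx_base_sandwich row_col_base_sandwich.
have Q2e1 : Q2 *m e1 = 0.
  by rewrite -(row_base_idemK e2_idem) -mulmxA mulmxE compl_mul_idem // mulmx0.
congr (_, _).
  rewrite mulmxDr mulmxDl row_col_base_sandwich // -scalemxAr -scalemxAl Q2e1.
  by rewrite mul0mx scaler0 addr0.
by rewrite raddfD /= weighted_tr_corner // add0r weighted_trZ divfK ?weighted_tr_e1_neq0.
Qed.

Lemma dimV : (\dim V + (\rank e2 * r + 1) = n * n)%N.
Proof.
by have := limg_ker_dim (linfun corner_weight) fullv; rewrite capfv corner_weight_onto !dimvf.
Qed.

Lemma perpV a : a \in V <->
  perp (fun x => x = s1 *: e1 + s2 *: e2 \/ exists m, x = e1 *m m *m e2) a.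
Proof.
have trE m : \tr (a *m (e1 *m m *m e2)) = \tr (e2 *m a *m e1 *m m).
  by rewrite !mulmxA mxtrace_mulC !mulmxA.
rewrite memV; split=> [[a0 wa] x [-> // | [m ->]] | a_perp].
  by move: a0; rewrite trE -!mulmxE => ->; rewrite mul0mx mxtrace0.
split; last exact: a_perp _ (or_introl erefl).
apply/matrixP => i j; rewrite [RHS]mxE -(mxtrace_mul_delta i j (e2 *m a *m e1)) -trE.
exact: a_perp _ (or_intror (ex_intro _ _ erefl)).
Qed.

Lemma V_idem_free E : E \in V -> E * E = E -> E = 0.
Proof.
move=> /memV[E_upper wE] E_idem.
have [A_idem D_idem] := idem_corner_diag E_idem E_upper.
have rA : (\rank (e1 * E * e1)%R <= r)%N by exact: mxrankM_maxr.
have rD : (\rank (e2 * E * e2)%R <= n - r)%N by rewrite -rank_compl; exact: mxrankM_maxr.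
have /negbNE : ~~ ((\rank (e1 * E * e1)%R, \rank (e2 * E * e2)%R) != (0%N, 0%N)).
  apply/negP => /(sigma_free rA rD).
  by rewrite mulrC [_ * s2]mulrC -!mxtrace_idem // -weighted_trE wE eqxx.
rewrite xpair_eqE !mxrank_eq0 => /andP[/eqP A0 /eqP D0].
by apply: (idem_corner_eq0 e1_idem E_idem).
Qed.

Lemma corner_idem_lift c : c = e2 * c * e1 ->
  exists g, [/\ g * g = g, e2 * g * e1 = c & weighted_tr g = 0].
Proof.
move=> c_corner; have czc : c * pinvmx c * c = c by exact: mulmxKpV.
have [] := corner_reflexive_inverse e1_idem c_corner czc.
move: (_ * c * _) => b b_corner cbc bcb.
have [p sp0] : exists p, s1 * p + s2 * (1 - p) = 0.
  by exists (s2 / (s2 - s1)); field; rewrite subr_eq0 eq_sym.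
have pq : p + (1 - p) = 1 by rewrite addrC subrK.
have [g_idem gc g11 g22] := idem_lift_corner e1_idem c_corner b_corner cbc bcb pq.
eexists; split; [exact: g_idem | exact: gc |].
have trC : \tr (b * c) = \tr (c * b) by exact: mxtrace_mulC.
by rewrite weighted_trE g11 g22 !mxtraceZ trC !mulrA -mulrDl sp0 mul0r.
Qed.

Lemma idem_in_superspace (N : {vspace 'M[F]_n}) x :
  (V <= N)%VS -> x \in N -> x \notin V -> exists g, [/\ g * g = g, g != 0 & g \in N].
Proof.
move=> VN xN xV; have e2_idem := compl_idem e1_idem.
set c := e2 * x * e1; set l := weighted_tr x / weighted_tr e1.
have c_corner : c = e2 * c * e1 by rewrite /c !mulrA e2_idem -(mulrA _ e1 e1) e1_idem.
have yV : x - (c + l *: e1) \in V.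
  apply/memV; split.
    rewrite mulrBr mulrDr (mulrBl e1) (mulrDl _ _ e1) -/c -c_corner -scalerAr -scalerAl.
    by rewrite compl_mul_idem // mul0r scaler0 addr0 subrr.
  rewrite raddfB raddfD /= (weighted_tr_corner c_corner) add0r weighted_trZ.
  by rewrite divfK ?weighted_tr_e1_neq0 // subrr.
have clN : c + l *: e1 \in N by rewrite -(subKr x (c + _)) memvB // (subvP VN).
have [l0 | l_neq0] := eqVneq l 0.
  have c_neq0 : c != 0.
    by apply: contraNneq xV => c0; move: yV; rewrite c0 l0 scale0r addr0 subr0.
  have [g [g_idem gc wg]] := corner_idem_lift c_corner.
  exists g; split=> //; first by apply: contraNneq c_neq0 => g0; rewrite -gc g0 mulr0 mul0r.
  have gcV : g - c \in V.
    apply/memV; split; last by rewrite raddfB /= wg (weighted_tr_corner c_corner) subrr.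
    by rewrite mulrBr (mulrBl e1) gc -c_corner subrr.
  have cN : c \in N by move: clN; rewrite l0 scale0r addr0.
  by rewrite -(subrK c g) memvD // (subvP VN).
have lc_corner : l^-1 *: c = e2 * (l^-1 *: c) * e1 by rewrite -scalerAr -scalerAl -c_corner.
have [ec _ _ _] := mul_corner_fe e1_idem c_corner.
exists (e1 + l^-1 *: c); split; first exact: idem_add_corner.
  apply: contraTneq r_gt0 => g0; have := congr1 (fun y => e1 * y) g0.
  by rewrite /= mulrDr e1_idem -scalerAr ec scaler0 addr0 mulr0 => ->; rewrite mxrank0.
have -> : e1 + l^-1 *: c = l^-1 *: (c + l *: e1).
  by rewrite scalerDr scalerA mulVf // scale1r addrC.
exact: memvZ.
Qed.

Lemma codimV : (\dim (fullv : {vspace 'M[F]_n}) - \dim V = r * n - r ^ 2 + 1)%N.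
Proof.
rewrite dimvf /dim /= -dimV rank_compl addKn.
by rewrite mulnBl mulnC -mulnn.
Qed.

Lemma V_proper : V != fullv.
Proof.
apply: contraNneq weighted_tr_e1_neq0 => V_full.
by have /memV[_ ->] : e1 \in V by rewrite V_full memvf.
Qed.

Lemma V_max (N : {vspace 'M[F]_n}) :
  mathieu_subspace N -> N != fullv -> (V <= N)%VS -> N = V.
Proof.
move=> N_ms N_proper VN; apply/eqP; rewrite eqEsubv VN andbT.
apply/subvP => x xN; apply/negPn/negP => xV.
have [g [g_idem g_neq0 gN]] := idem_in_superspace VN xN xV.
by rewrite (mathieu_idem_full N_ms g_idem g_neq0 gN) eqxx in N_proper.
Qed.

Lemma V_maximal : maximal_mathieu_subspace V.
Proof. exact: And3 (mathieu_idem_free V_idem_free) V_proper V_max. Qed.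

End CornerSubspace.

Theorem corollary2p6 (F : fieldType) (n r : nat) (e1 : 'M[F]_n)
  (sigma1 sigma2 : F) :
  e1 *m e1 = e1 ->
  \rank e1 = r ->
  (0 < r)%N -> (r < n)%N ->
  sigma1 != sigma2 ->
  (forall k1 k2 : nat, (k1 <= r)%N -> (k2 <= n - r)%N -> (k1, k2) != (0%N, 0%N) ->
     k1%:R * sigma1 + k2%:R * sigma2 != 0) ->
  let e2 := 1%:M - e1 in
  exists V : {vspace 'M[F]_n},
    [/\ (forall a, a \in V <->
           perp (fun x => x = sigma1 *: e1 + sigma2 *: e2 \/
                          exists m : 'M[F]_n, x = e1 *m m *m e2) a),
        (forall a, a \in V <->
           (e2 *m a *m e1 = 0 /\
            sigma1 * \tr (e1 *m a *m e1) + sigma2 * \tr (e2 *m a *m e2) = 0)),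
        maximal_mathieu_subspace V &
        (\dim (fullv : {vspace 'M[F]_n}) - \dim V = r * n - r ^ 2 + 1)%N].
Proof.
case: n e1 => [|n'] e1 e1_idem <- r_gt0 r_lt_n s_neq sigma_free e2.
  by rewrite ltn0 in r_lt_n.
rewrite mulmxE in e1_idem.
exists (V e1 sigma1 sigma2); split.
- exact: perpV.
- by move=> a; rewrite -weighted_trE //; exact: memV.
- exact: V_maximal.
- exact: codimV.
Qed.
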